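(* (1) If $\mathcal A=(X,(A,A^\vee),\kappa)$ is a cospectral algebraic quotient vector bundle, then for every open $U\subset X$, $\gamma_{F\circ\kappa}(U)=F\bigl(\gamma^\complement_\kappa(X\setminus U)\bigr)$; that is, $\complement\colon(\Omega X,(A^\vee,A),\gamma_{F\circ\kappa})\to((\mathcal CX)^{\mathrm{op}},(A^\vee,A),F\circ\gamma^\complement_\kappa)$, $U\mapsto X\setminus U$, is an $\mathrm{id}$-isomorphism. (2) If $\mathcal A=(X,(A,A^\vee),\kappa)$ is spectral, then for every closed $C\subset X$, $\gamma^\complement_{F\circ\kappa}(C)=F\bigl(\gamma_\kappa(X\setminus C)\bigr)$; that is, $\complement\colon((\Omega X)^{\mathrm{op}},(A^\vee,A),F\circ\gamma_\kappa)\to(\mathcal CX,(A^\vee,A),\gamma^\complement_{F\circ\kappa})$ is an $\mathrm{id}$-isomorphism. (3) For any algebraic linearized colocale $\mathfrak A^\complement=(L^\complement,(A,A^\vee),\gamma^\complement)$, the algebraic quotient vector bundles $\boldsymbol\Sigma\bigl((\mathfrak A^\complement)^\vee\bigr)$ and $(\boldsymbol I\mathfrak A^\complement)^\vee$ are isomorphic. (4) For any algebraic linearized locale $\mathfrak A=(L,(A,A^\vee),\gamma)$, the algebraic quotient vector bundles $(\boldsymbol\Sigma\mathfrak A)^\vee$ and $\boldsymbol I(\mathfrak A^\vee)$ are isomorphic.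
   Context: A dual pair $(A,A^\vee)$ consists of complex vector spaces with a non-degenerate bilinear form $\langle\cdot,\cdot\rangle\colon A\times A^\vee\to\mathbb C$. For subspaces $V\subset A$, $\mathcal V\subset A^\vee$: $F(V)=\{\phi:\langle a,\phi\rangle=0\ \forall a\in V\}$, $G(\mathcal V)=\{a:\langle a,\phi\rangle=0\ \forall\phi\in\mathcal V\}$. $\mathrm{Max}\,A$ is the image of $G$, $\mathrm{Max}\,A^\vee$ the image of $F$; these are complete lattices, with join in $\mathrm{Max}\,A$ given by $\bigvee V_\alpha=G F(\mathrm{span}\bigcup V_\alpha)$ (similarly in $\mathrm{Max}\,A^\vee$). The pair $(A^\vee,A)$ is a dual pair with the transposed form. An algebraic quotient vector bundle is $(X,(A,A^\vee),\kappa)$, $X$ a space, $\kappa\colon X\to\mathrm{Max}\,A$ any map; its codual is $(X,(A^\vee,A),F\circ\kappa)$. It is spectral if $\{x:a\notin\kappa(x)\}$ is open for each $a\in A$, cospectral if $\{x:\kappa(x)\subset V\}$ is closed for each $V\in\mathrm{Max}\,A$. Restriction map: $\gamma_\kappa(U)=\mathrm{span}\{a:\mathrm{int}\{x:a\notin\kappa(x)\}\subset U\}$ for $U$ open. Corestriction map: $\gamma^\complement_\kappa(C)=\bigvee_{x\in C}\kappa(x)$ (join in $\mathrm{Max}\,A$) for $C$ closed. $\Omega X$, $\mathcal CX$: open and closed sets, $\mathrm{op}$ denotes opposite order. An $\mathrm{id}$-isomorphism $(L_1,(B,B^\vee),\gamma_1)\to(L_2,(B,B^\vee),\gamma_2)$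 is a lattice isomorphism $h\colon L_1\to L_2$ with $\gamma_1=\gamma_2\circ h$. An algebraic linearized locale is $(L,(A,A^\vee),\gamma)$, $L$ a locale, $\gamma\colon L\to\mathrm{Max}\,A$ meet-preserving; an algebraic linearized colocale is $(L^\complement,(A,A^\vee),\gamma^\complement)$, $L^\complement$ a complete lattice whose opposite is a locale, $\gamma^\complement\colon L^\complement\to\mathrm{Max}\,A$ join-preserving. Codual of a linearized locale: $\mathfrak A^\vee=(L^{\mathrm{op}},(A^\vee,A),F\circ\gamma)$; codual of a linearized colocale: $(\mathfrak A^\complement)^\vee=((L^\complement)^{\mathrm{op}},(A^\vee,A),F\circ\gamma^\complement)$. For a locale $L$, $\Sigma L$ is the set of primes ($p\ne1$, $a\wedge b\le p\Rightarrow a\le p$ or $b\le p$) with open sets $\{p:a\not\le p\}$; $\boldsymbol\Sigma(L,(A,A^\vee),\gamma)=(\Sigma L,(A,A^\vee),\gamma|_{\Sigma L})$. For a colocale, $IL^\complement$ is the set of $c\ne0$ with $c\le a\vee b\Rightarrow c\le a$ or $c\le b$, closed sets $\{c:c\le a\}$; $\boldsymbol I(L^\complement,(A,A^\vee),\gamma^\complement)=(IL^\complement,(A,A^\vee),\gamma^\complement|_{IL^\complement})$. An isomorphism between algebraic quotient vector bundles $(X,(B,B^\vee),\kappa_1)$ and $(Y,(B,B^\vee),\kappa_2)$ with the same dual pair is a homeomorphism $h\colon X\to Y$ with $\kappa_2\circ h=\kappa_1$. *)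

From mathcomp Require Import all_boot all_order all_algebra.
From mathcomp Require Import boolp classical_sets reals topology complex.
Set Implicit Arguments. Unset Strict Implicit. Unset Printing Implicit Defensive.
Import GRing.Theory.
Local Open Scope classical_set_scope.
Local Open Scope ring_scope.

Section DualPair.
Variables (K : fieldType) (A B : lmodType K).

Definition dual_pair (form : A -> B -> K) : Prop :=
  [/\ (forall (k : K) (a a' : A) (phi : B),
          form (k *: a + a') phi = k * form a phi + form a' phi),
      (forall (k : K) (a : A) (phi phi' : B),
          form a (k *: phi + phi') = k * form a phi + form a phi'),
      (forall a : A, (forall phi : B, form a phi = 0) -> a = 0) &
      (forall phi : B, (forall a : A, form a phi = 0) -> phi = 0)].

Definition Fann (form : A -> B -> K) (V : set A) : set B :=
  [set phi | forall a, V a -> form a phi = 0].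
Definition Gann (form : A -> B -> K) (W : set B) : set A :=
  [set a | forall phi, W phi -> form a phi = 0].

Definition MaxA (form : A -> B -> K) (V : set A) : Prop :=
  exists W : set B, V = Gann form W.

End DualPair.

(* the transposed form: (A^vee, A) *)
Definition flipf (K : fieldType) (A B : lmodType K) (form : A -> B -> K) :
  B -> A -> K := fun phi a => form a phi.

Section Span.
Variables (K : fieldType) (A : lmodType K).
Definition subspace (W : set A) : Prop :=
  W 0 /\ forall (k : K) (x y : A), W x -> W y -> W (k *: x + y).
Definition span (S : set A) : set A :=
  [set a | forall W : set A, subspace W -> S `<=` W -> W a].
End Span.

Definition joinMax (K : fieldType) (A B : lmodType K) (form : A -> B -> K)
  (S : set (set A)) : set A :=
  Gann form (Fann form (span [set a | exists2 V, S V & V a])).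

Section Bundles.
Variables (K : fieldType) (A B : lmodType K) (X : topologicalType).

Definition spectral (kappa : X -> set A) : Prop :=
  forall a : A, open [set x | ~ kappa x a].

Definition cospectral (form : A -> B -> K) (kappa : X -> set A) : Prop :=
  forall V : set A, MaxA form V -> closed [set x | kappa x `<=` V].

Definition restr (kappa : X -> set A) (U : set X) : set A :=
  span [set a | interior [set x | ~ kappa x a] `<=` U].

Definition corestr (form : A -> B -> K) (kappa : X -> set A) (C : set X) :
  set A := joinMax form (kappa @` C).
End Bundles.

Section Lattices.
Variable T : Type.

Definition is_poset (le : T -> T -> Prop) : Prop :=
  [/\ forall x, le x x,
      forall x y, le x y -> le y x -> x = y &
      forall x y z, le x y -> le y z -> le x z].

Definition is_lub_in (P : T -> Prop) (le : T -> T -> Prop) (S : set T) (x : T) :=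
  [/\ P x, forall s, S s -> le s x &
      forall y, P y -> (forall s, S s -> le s y) -> le x y].
Definition is_lub le S x := is_lub_in (fun _ => True) le S x.
Definition is_glb_in P (le : T -> T -> Prop) S x :=
  is_lub_in P (fun a b => le b a) S x.
Definition is_glb le S x := is_glb_in (fun _ => True) le S x.

Definition complete_lattice (le : T -> T -> Prop) : Prop :=
  is_poset le /\ forall S : set T, exists x, is_lub le S x.

Definition locale (le : T -> T -> Prop) : Prop :=
  complete_lattice le /\
  forall (a : T) (S : set T) (j m : T),
    is_lub le S j -> is_glb le [set x | x = a \/ x = j] m ->
    is_lub le [set c | exists2 s, S s & is_glb le [set x | x = a \/ x = s] c] m.

Definition colocale (le : T -> T -> Prop) : Prop :=
  locale (fun a b => le b a).

Definition prime_el (le : T -> T -> Prop) (p : T) : Prop :=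
  ~ (forall x, le x p) /\
  forall a b m, is_glb le [set x | x = a \/ x = b] m -> le m p ->
                le a p \/ le b p.

Definition coprime_el (le : T -> T -> Prop) (c : T) : Prop :=
  ~ (forall x, le c x) /\
  forall a b j, is_lub le [set x | x = a \/ x = b] j -> le c j ->
                le c a \/ le c b.

Definition Sigma_open (le : T -> T -> Prop) : set (set {p : T | prime_el le p}) :=
  [set U | exists a : T, U = [set p | ~ le a (proj1_sig p)]].

(* I L^c: closed sets {c | c <= a}, i.e. open sets are their complements *)
Definition I_open (le : T -> T -> Prop) : set (set {c : T | coprime_el le c}) :=
  [set U | exists a : T, ~` U = [set c | le (proj1_sig c) a]].
End Lattices.

Definition subset_rel (A : Type) (V W : set A) : Prop := V `<=` W.

Section Linearized.
Variables (K : fieldType) (A B : lmodType K) (T : Type).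

Definition linearized_locale (form : A -> B -> K) (le : T -> T -> Prop)
  (gamma : T -> set A) : Prop :=
  [/\ locale le, forall l, MaxA form (gamma l) &
      forall (S : set T) (m : T), is_glb le S m ->
        is_glb_in (MaxA form) (@subset_rel A) (gamma @` S) (gamma m)].

Definition linearized_colocale (form : A -> B -> K) (le : T -> T -> Prop)
  (gamma : T -> set A) : Prop :=
  [/\ colocale le, forall l, MaxA form (gamma l) &
      forall (S : set T) (j : T), is_lub le S j ->
        is_lub_in (MaxA form) (@subset_rel A) (gamma @` S) (gamma j)].
End Linearized.

Definition homeo (X Y : Type) (openX : set (set X)) (openY : set (set Y))
  (h : X -> Y) : Prop :=
  bijective h /\ forall U : set Y, openY U <-> openX (h @^-1` U).

(* isomorphism of algebraic quotient vector bundles with the same dual pair *)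
Definition bundle_iso (X Y V : Type) (openX : set (set X)) (openY : set (set Y))
  (kappa1 : X -> set V) (kappa2 : Y -> set V) : Prop :=
  exists h : X -> Y, homeo openX openY h /\ forall x, kappa2 (h x) = kappa1 x.

Arguments Sigma_open {T} le.
Arguments I_open {T} le.

From Pilot Require Import Defs.
From mathcomp Require Import all_boot all_order all_algebra.
From mathcomp Require Import boolp classical_sets reals topology complex.
Local Open Scope classical_set_scope.
Local Open Scope ring_scope.
Set Implicit Arguments.
Import GRing.Theory.

(* (1) and (2): (co)spectrality makes [{x | phi \notin F (kappa x)}] (resp.
   [{x | a \notin kappa x}]) open, so the interior in the definition of the
   restriction map disappears and the restriction to an open set [U] becomes
   the intersection of the fibres outside [U].  The annihilator of a join is
   the intersection of the annihilators of its terms, and the two sides agree.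
   (3) and (4): the primes of the opposite order are literally the coprimes,
   and the opens of [Sigma] are the complements of the closeds of [I], so the
   identity is an isomorphism; no lattice structure is needed. *)

Section Span.
Variables (K : fieldType) (A : lmodType K).

Lemma sub_span (S : set A) : S `<=` Defs.span S.
Proof. by move=> a Sa W _; apply. Qed.

Lemma span_id (W : set A) : Defs.subspace W -> Defs.span W = W.
Proof.
move=> sW; apply/seteqP; split => a; first exact.
exact: sub_span.
Qed.

Lemma subspace_bigcap (I : Type) (D : set I) (W : I -> set A) :
  (forall i, D i -> Defs.subspace (W i)) -> Defs.subspace (\bigcap_(i in D) W i).
Proof.
move=> sW; split; first by move=> i /sW [].
by move=> k x y Wx Wy i Di; case: (sW i Di) => _; apply; [apply: Wx | apply: Wy].
Qed.

End Span.

Section Annihilators.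
Variables (K : fieldType) (A B : lmodType K) (form : A -> B -> K).

Lemma Gann_FannK (V : set A) : MaxA form V -> Gann form (Fann form V) = V.
Proof.
move=> [W ->]; apply/seteqP; split => a Ha.
  by move=> phi Wphi; apply: Ha => b; apply.
by move=> phi; apply.
Qed.

Lemma Fann_GannK (Y : set A) :
  Fann form (Gann form (Fann form Y)) = Fann form Y.
Proof.
apply/seteqP; split => phi Hphi; last by move=> a; apply.
by move=> a Ya; apply: Hphi => psi; apply.
Qed.

Lemma MaxA_corestr (X : topologicalType) (kappa : X -> set A) (C : set X) :
  MaxA form (corestr form kappa C).
Proof. by eexists. Qed.

Lemma Fann_bigcup_image (X : Type) (kappa : X -> set A) (C : set X) :
  Fann form [set a | exists2 V, (kappa @` C) V & V a]
  = \bigcap_(x in C) Fann form (kappa x).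
Proof.
apply/seteqP; split => phi Hphi.
  by move=> x Cx a kxa; apply: Hphi; exists (kappa x) => //; exists x.
by move=> a [_ [x Cx <-] kxa]; exact: Hphi x Cx a kxa.
Qed.

Section LeftLinear.
Hypothesis form_linearl : forall (k : K) (a a' : A) (phi : B),
  form (k *: a + a') phi = k * form a phi + form a' phi.

Lemma Fann_span (Y : set A) : Fann form (Defs.span Y) = Fann form Y.
Proof.
apply/seteqP; split => phi Hphi; first by move=> a /sub_span; apply: Hphi.
move=> a /(_ [set b | form b phi = 0]); apply; last exact: Hphi.
split => [|k x y /= Hx Hy]; last by rewrite form_linearl Hx Hy mulr0 addr0.
have := form_linearl 1 0 0 phi; rewrite scale1r addr0 mul1r => e.
by apply: (@addrI _ (form 0 phi)); rewrite addr0 -e.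
Qed.

Lemma Fann_corestr (X : topologicalType) (kappa : X -> set A) (C : set X) :
  Fann form (corestr form kappa C) = \bigcap_(x in C) Fann form (kappa x).
Proof. by rewrite /corestr /joinMax Fann_GannK Fann_span Fann_bigcup_image. Qed.

End LeftLinear.

Lemma subspace_Fann (V : set A) :
  (forall (k : K) (a : A) (phi phi' : B),
     form a (k *: phi + phi') = k * form a phi + form a phi') ->
  Defs.subspace (Fann form V).
Proof.
move=> form_linearr; split => [a _|k x y Hx Hy a Va].
  have := form_linearr 1 a 0 0; rewrite scale1r addr0 mul1r => e.
  by apply: (@addrI _ (form a 0)); rewrite addr0 -e.
by rewrite form_linearr Hx // Hy // mulr0 addr0.
Qed.

End Annihilators.

Section Bundles.
Variables (K : fieldType) (X : topologicalType).

Lemma spectral_restrE (V : lmodType K) (kappa : X -> set V) (U : set X) :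
  spectral kappa -> restr kappa U = Defs.span (\bigcap_(x in ~` U) kappa x).
Proof.
move=> spec; rewrite /restr; congr Defs.span; apply/seteqP; split => a /=.
  by rewrite (interior_id _).1 // => sub x nUx; apply: contrapT => /sub.
by rewrite (interior_id _).1 // => Ha x nka; apply: contrapT => /Ha.
Qed.

Variables (A B : lmodType K).

Lemma cospectral_Fann_spectral (form : A -> B -> K) (kappa : X -> set A) :
  cospectral form kappa -> spectral (fun x => Fann form (kappa x)).
Proof.
move=> cosp phi.
have -> : [set x | ~ Fann form (kappa x) phi]
          = ~` [set x | kappa x `<=` Gann form [set phi]].
  apply/seteqP; split => x /= nF; apply: contra_not nF.
    by move=> Gk a ka; exact: Gk a ka phi erefl.
  by move=> F a ka _ ->; exact: F a ka.
by rewrite openC; apply: cosp; eexists.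
Qed.

Lemma restr_Fann_cospectral (form : A -> B -> K) (kappa : X -> set A) (U : set X) :
  dual_pair form -> cospectral form kappa ->
  restr (fun x => Fann form (kappa x)) U = Fann form (corestr form kappa (~` U)).
Proof.
move=> [linl linr _ _] cosp.
rewrite spectral_restrE; last exact: cospectral_Fann_spectral.
rewrite Fann_corestr // span_id //.
by apply: subspace_bigcap => x _; exact: subspace_Fann.
Qed.

Lemma corestr_Fann_spectral (form : A -> B -> K) (kappa : X -> set A) (C : set X) :
  dual_pair form -> (forall x, MaxA form (kappa x)) -> spectral kappa ->
  corestr (flipf form) (fun x => Fann form (kappa x)) C
  = Fann form (restr kappa (~` C)).
Proof.
move=> [linl linr _ _] maxk spec.
rewrite spectral_restrE // setCK Fann_span //.
(* [Fann] and [Gann] of the transposed form are [Gann] and [Fann] of [form]. *)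
have -> : \bigcap_(x in C) kappa x
          = Fann (flipf form) (corestr (flipf form) (fun x => Fann form (kappa x)) C).
  rewrite Fann_corestr; last by move=> k phi phi' a; exact: linr.
  by apply: eq_bigcapr => x _; exact/esym/(@Gann_FannK _ _ _ form).
symmetry; apply: (@Gann_FannK _ _ _ (flipf form)); exact: MaxA_corestr.
Qed.

End Bundles.

Lemma Sigma_opp_I_bundle_iso (T V : Type) (le : T -> T -> Prop) (f : T -> set V) :
  bundle_iso (Sigma_open (fun a b => le b a)) (I_open le)
    (fun p => f (proj1_sig p)) (fun c => f (proj1_sig c)).
Proof.
exists id; split => //; split; first by exists id.
move=> U; split => -[a Ua]; exists a.
  by rewrite -[U]setCK Ua.
have -> : U = ~` [set c | le (proj1_sig c) a] := Ua.
by rewrite setCK.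
Qed.

Theorem lemma6p9 (R : realType) (A B : lmodType R[i]) (form : A -> B -> R[i]) :
  dual_pair form ->
  (* (1) *)
  (forall (X : topologicalType) (kappa : X -> set A),
     (forall x, MaxA form (kappa x)) -> cospectral form kappa ->
     forall U : set X, open U ->
       restr (fun x => Fann form (kappa x)) U
       = Fann form (corestr form kappa (~` U))) /\
  (* (2) *)
  (forall (X : topologicalType) (kappa : X -> set A),
     (forall x, MaxA form (kappa x)) -> spectral kappa ->
     forall C : set X, closed C ->
       corestr (flipf form) (fun x => Fann form (kappa x)) C
       = Fann form (restr kappa (~` C))) /\
  (* (3) *)
  (forall (T : Type) (le : T -> T -> Prop) (gamma : T -> set A),
     linearized_colocale form le gamma ->
     bundle_iso (Sigma_open (fun a b => le b a)) (I_open le)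
       (fun p => Fann form (gamma (proj1_sig p)))
       (fun c => Fann form (gamma (proj1_sig c)))) /\
  (* (4) *)
  (forall (T : Type) (le : T -> T -> Prop) (gamma : T -> set A),
     linearized_locale form le gamma ->
     bundle_iso (Sigma_open le) (I_open (fun a b => le b a))
       (fun p => Fann form (gamma (proj1_sig p)))
       (fun c => Fann form (gamma (proj1_sig c)))).
Proof.
move=> dp; split; [|split; [|split]].
- by move=> X kappa _ cosp U _; exact: restr_Fann_cospectral.
- by move=> X kappa maxk spec C _; exact: corestr_Fann_spectral.
- move=> T le gamma _.
  exact: (Sigma_opp_I_bundle_iso le (fun t => Fann form (gamma t))).
- move=> T le gamma _.
  exact: (Sigma_opp_I_bundle_iso (fun a b => le b a) (fun t => Fann form (gamma t))).
Qed.
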